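(* Let $Y$ be a compact metric space and $X:=Z\times Y$. Then every homeomorphism $\alpha\in\mathcal{O}(\zeta\times\mathrm{id})\subset\mathrm{Homeo}(X)$ has mean dimension zero.
   Context: $(Z,\zeta)$ is the point-like minimal system of Deeley–Putnam–Strung associated to a minimal diffeomorphism of an odd-dimensional sphere $S^d$, $d\ge3$: $Z$ is an infinite compact connected metric space of finite covering dimension with the $K$-theory and Čech cohomology of a point, and $\zeta$ is a minimal homeomorphism of $Z$. $\mathcal{O}(\zeta\times\mathrm{id})=\{G^{-1}\circ(\zeta\times\mathrm{id})\circ G : G\in\mathrm{Homeo}(X)\}$. Mean dimension: for a finite open cover $\mathcal{U}$, $\mathrm{ord}(\mathcal{U})=\max_x\sum_{U\in\mathcal{U}}\chi_U(x)-1$, $\mathcal{D}(\mathcal{U})=\min$ of $\mathrm{ord}(\mathcal{V})$ over finite open refinements $\mathcal{V}$ of $\mathcal{U}$, $\mathcal{D}(\mathcal{U},\alpha,n)=\mathcal{D}(\mathcal{U}\vee\alpha^{-1}\mathcal{U}\vee\cdots\vee\alpha^{-n+1}\mathcal{U})$, $\mathcal{D}(\mathcal{U},\alpha)=\lim_n\mathcal{D}(\mathcal{U},\alpha,n)/n$, and $\mathrm{mdim}(\alpha)=\sup_{\mathcal{U}}\mathcal{D}(\mathcal{U},\alpha)$. *)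

From HB Require Import structures.
From mathcomp Require Import all_boot all_order all_algebra.
From mathcomp Require Import all_classical all_reals all_analysis.
From Stdlib Require List.
Set Implicit Arguments. Unset Strict Implicit. Unset Printing Implicit Defensive.
Import Order.TTheory GRing.Theory Num.Theory.
Import numFieldNormedType.Exports.
Local Open Scope classical_set_scope.
Local Open Scope ring_scope.

Section Defs.
Context {T : topologicalType}.

Definition is_homeo (f : T -> T) : Prop :=
  exists g : T -> T, cancel f g /\ cancel g f /\ continuous f /\ continuous g.

Definition finite_open_cover (U : seq (set T)) : Prop :=
  List.Forall open U /\ (forall x : T, exists A, List.In A U /\ A x).

Definition refines (V U : seq (set T)) : Prop :=
  forall B, List.In B V -> exists A, List.In A U /\ B `<=` A.

(* ord(V) <= n, i.e. every point lies in at most n+1 members of V *)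
Definition ord_le (V : seq (set T)) (n : nat) : Prop :=
  forall x : T, (count (fun A => `[< A x >]) V <= n.+1)%N.

Definition cover_D {R : realType} (U : seq (set T)) : R :=
  inf [set (n%:R : R) | n in [set n : nat |
         exists V, finite_open_cover V /\ refines V U /\ ord_le V n]].

Definition cover_join (U V : seq (set T)) : seq (set T) :=
  [seq A `&` B | A <- U, B <- V].

Fixpoint cover_iter_join (a : T -> T) (U : seq (set T)) (n : nat) : seq (set T) :=
  match n with
  | 0 => [:: setT]
  | k.+1 => cover_join (cover_iter_join a U k)
                       [seq (iter k a) @^-1` A | A <- U]
  end.

Definition cover_D_n {R : realType} (U : seq (set T)) (a : T -> T) (n : nat) : R :=
  cover_D (cover_iter_join a U n).

Definition cover_D_dyn {R : realType} (U : seq (set T)) (a : T -> T) : R :=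
  limn (fun n : nat => (cover_D_n U a n : R) / n%:R).

Definition mdim {R : realType} (a : T -> T) : \bar R :=
  ereal_sup [set ((cover_D_dyn U a : R)%:E) | U in finite_open_cover].

Definition finite_covering_dim : Prop :=
  exists d : nat, forall U, finite_open_cover U ->
    exists V, finite_open_cover V /\ refines V U /\ ord_le V d.

Definition minimal_map (f : T -> T) : Prop :=
  forall A : set T, closed A -> f @` A = A -> A = set0 \/ A = setT.
End Defs.

Definition prod_id {Z Y : Type} (z : Z -> Z) : Z * Y -> Z * Y :=
  fun p => (z p.1, p.2).

Definition conj_orbit {X : topologicalType} (b : X -> X) : set (X -> X) :=
  [set a | exists G Ginv : X -> X,
     cancel G Ginv /\ cancel Ginv G /\ continuous G /\ continuous Ginv /\
     a = Ginv \o b \o G].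

From HB Require Import structures.
From mathcomp Require Import all_boot all_order all_algebra finmap.
From mathcomp Require Import all_classical all_reals all_analysis.
Set Implicit Arguments. Unset Strict Implicit. Unset Printing Implicit Defensive.
Import Order.TTheory GRing.Theory Num.Theory.
Import numFieldNormedType.Exports.
Local Open Scope classical_set_scope.
Local Open Scope ring_scope.

(* Mean dimension is invariant under topological conjugacy, so it suffices to treat
   zeta x id on Z x Y.  Given a finite open cover U of Z x Y, fix a Lebesgue number e
   of U and finite open covers P of Z and Q of Y by sets lying in e-balls, so that every
   C x D with C in P and D in Q lies in a member of U.  The n-th dynamical join of P
   under zeta has a refinement V of order at most d = dim Z; the products of V with Q
   refine the n-th dynamical join of U under zeta x id and have order less than
   (d + 1) |Q|, a bound independent of n.  Hence D(U, zeta x id, n) / n tends to 0. *)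

Lemma In_cat (T : Type) (s t : seq T) x :
  List.In x (s ++ t) <-> List.In x s \/ List.In x t.
Proof. by elim: s => /= [|a s ->]; tauto. Qed.

Lemma In_map (A B : Type) (f : A -> B) s a : List.In a s -> List.In (f a) (map f s).
Proof. by elim: s => //= b s IH [->|/IH]; [left|right]. Qed.

Lemma In_map_inv {A B : Type} {f : A -> B} {s b} :
  List.In b (map f s) -> exists2 a, List.In a s & b = f a.
Proof.
elim: s => //= a s IH [<-|/IH [a' sa' ->]]; first by exists a; [left|].
by exists a'; [right|].
Qed.

Lemma In_allpairs (A B C : Type) (f : A -> B -> C) s t a b :
  List.In a s -> List.In b t -> List.In (f a b) [seq f x y | x <- s, y <- t].
Proof.
elim: s => //= a' s IH sa tb; apply/In_cat.
by case: sa => [->|sa]; [left; exact: In_map | right; exact: IH].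
Qed.

Lemma In_allpairs_inv {A B C : Type} {f : A -> B -> C} {s t c} :
  List.In c [seq f x y | x <- s, y <- t] ->
  exists a b, [/\ List.In a s, List.In b t & c = f a b].
Proof.
elim: s => //= a s IH h; case/In_cat: h => h.
  by have [b tb ->] := In_map_inv h; exists a, b; split => //; left.
by have [a' [b [sa' tb ->]]] := IH h; exists a', b; split => //; right.
Qed.

Lemma count_allpairs_leq (A B C : Type) (f : A -> B -> C)
    (p : pred C) (pA : pred A) (pB : pred B) s t :
  (forall a b, p (f a b) -> pA a && pB b) ->
  (count p [seq f x y | x <- s, y <- t] <= count pA s * count pB t)%N.
Proof.
move=> pf; elim: s => //= a s IH; rewrite count_cat mulnDl leq_add // count_map.
case: (boolP (pA a)) => [_|pAn]; first by rewrite mul1n sub_count // => b /pf/andP[].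
rewrite mul0n leqn0 -(count_pred0 t); apply/eqP/eq_count => b /=.
by apply/negbTE/negP => /pf/andP[pAa _]; rewrite pAa in pAn.
Qed.

Lemma In_mem (T : eqType) (x : T) (s : seq T) : x \in s -> List.In x s.
Proof. by elim: s => //= a s IH; rewrite in_cons => /orP [/eqP ->|/IH]; [left|right]. Qed.

Definition cover_preimage {S T : Type} (h : S -> T) (U : seq (set T)) : seq (set S) :=
  [seq h @^-1` A | A <- U].

Lemma iter_semiconj {S T : Type} (h : S -> T) (a : S -> S) (b : T -> T) k x :
  (forall x, h (a x) = b (h x)) -> h (iter k a x) = iter k b (h x).
Proof. by move=> hab; elim: k => //= k <-. Qed.

Lemma iter_continuous {T : topologicalType} (a : T -> T) k :
  continuous a -> continuous (iter k a).
Proof.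
move=> ca; elim: k => [|k IH] x /=; first exact: cvg_id.
exact: continuous_comp (IH x) (ca _).
Qed.

Section FiniteOpenCovers.
Context {T : topologicalType}.
Implicit Types (U V : seq (set T)) (a : T -> T).

Definition refinement_orders U : set nat :=
  [set n | exists V, finite_open_cover V /\ refines V U /\ ord_le V n].

Lemma finite_open_coverT : finite_open_cover [:: [set: T]].
Proof.
split=> [|x]; first by constructor; [exact: openT | constructor].
by exists setT; split; [left|].
Qed.

Lemma finite_open_cover_join U V :
  finite_open_cover U -> finite_open_cover V -> finite_open_cover (cover_join U V).
Proof.
move=> [/List.Forall_forall oU cU] [/List.Forall_forall oV cV]; split.
  apply/List.Forall_forall => _ /In_allpairs_inv [A [B [UA VB ->]]].
  by apply: openI; [exact: oU | exact: oV].
move=> x; have [A [UA Ax]] := cU x; have [B [VB Bx]] := cV x.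
by exists (A `&` B); split; [exact: In_allpairs | split].
Qed.

Lemma cover_D_le {R : realType} U n :
  refinement_orders U n -> 0 <= (cover_D U : R) <= n%:R.
Proof.
move=> Un; rewrite /cover_D; set S := [set _ | _ in _].
have Sn : S n%:R by exists n.
have S_ge0 : lbound S 0 by move=> _ [k _ <-].
apply/andP; split; first by apply: lb_le_inf => //; exists n%:R.
by apply: ge_inf => //; exists 0.
Qed.

End FiniteOpenCovers.

Section CoverPreimage.
Variables (S T : topologicalType) (h : S -> T).
Implicit Types (U V : seq (set T)).

Lemma finite_open_cover_preimage U :
  continuous h -> finite_open_cover U -> finite_open_cover (cover_preimage h U).
Proof.
move=> ch [/List.Forall_forall oU cU]; split.
  apply/List.Forall_forall => _ /In_map_inv [A UA ->].
  by apply: open_comp; [move=> x _; exact: ch | exact: oU].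
by move=> x; have [A [UA Ax]] := cU (h x); exists (h @^-1` A); split => //; exact: In_map.
Qed.

Lemma refines_preimage U V :
  refines V U -> refines (cover_preimage h V) (cover_preimage h U).
Proof.
move=> VU _ /In_map_inv [B VB ->]; have [A [UA BA]] := VU B VB.
by exists (h @^-1` A); split; [exact: In_map | exact: preimage_subset].
Qed.

Lemma ord_le_preimage V n : ord_le V n -> ord_le (cover_preimage h V) n.
Proof. by move=> Vn x; rewrite count_map; exact: Vn. Qed.

Lemma refinement_orders_preimage U : continuous h ->
  refinement_orders U `<=` refinement_orders (cover_preimage h U).
Proof.
move=> ch n [V [cV [VU Vn]]]; exists (cover_preimage h V); split; last split.
- exact: finite_open_cover_preimage.
- exact: refines_preimage.
- exact: ord_le_preimage.
Qed.

Lemma cover_join_preimage U V :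
  cover_join (cover_preimage h U) (cover_preimage h V) =
  cover_preimage h (cover_join U V).
Proof. by rewrite /cover_join /cover_preimage map_allpairs allpairs_mapl allpairs_mapr. Qed.

Lemma cover_iter_join_preimage (a : S -> S) (b : T -> T) U n :
  (forall x, h (a x) = b (h x)) ->
  cover_iter_join a (cover_preimage h U) n = cover_preimage h (cover_iter_join b U n).
Proof.
move=> hab; elim: n => //= k ->; rewrite -cover_join_preimage /cover_preimage -!map_comp.
congr cover_join; apply: eq_map => A /=; apply/funext => x /=.
by rewrite (iter_semiconj _ _ hab).
Qed.

Lemma cover_preimageK (g : T -> S) U :
  cancel g h -> cover_preimage g (cover_preimage h U) = U.
Proof.
move=> gK; rewrite /cover_preimage -map_comp -[RHS]map_id; apply: eq_map => A /=.
by apply/funext => x /=; rewrite gK.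
Qed.

End CoverPreimage.

Lemma finite_open_cover_iter_join {T : topologicalType} (a : T -> T) U n :
  continuous a -> finite_open_cover U -> finite_open_cover (cover_iter_join a U n).
Proof.
move=> ca cU; elim: n => [|k IH] /=; first exact: finite_open_coverT.
apply: finite_open_cover_join => //.
exact: finite_open_cover_preimage (iter_continuous ca) cU.
Qed.

Section Conjugacy.
Variables (S T : topologicalType) (h : S -> T) (g : T -> S).
Hypotheses (hK : cancel h g) (gK : cancel g h).
Hypotheses (ch : continuous h) (cg : continuous g).

Lemma cover_D_preimage {R : realType} (U : seq (set T)) :
  cover_D (cover_preimage h U) = cover_D U :> R.
Proof.
suff orders_eq : refinement_orders (cover_preimage h U) = refinement_orders U.
  by rewrite /cover_D; congr (inf [set _ | _ in _]); exact: orders_eq.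
apply/seteqP; split; last exact: refinement_orders_preimage.
by have := refinement_orders_preimage (U := cover_preimage h U) cg; rewrite cover_preimageK.
Qed.

Lemma cover_D_dyn_conj {R : realType} (a : S -> S) (b : T -> T) (U : seq (set T)) :
  (forall x, h (a x) = b (h x)) ->
  cover_D_dyn (cover_preimage h U) a = cover_D_dyn U b :> R.
Proof.
move=> hab; rewrite /cover_D_dyn /cover_D_n.
by under eq_fun => n do rewrite (cover_iter_join_preimage _ _ hab) cover_D_preimage.
Qed.

Lemma mdim_conj {R : realType} (a : S -> S) (b : T -> T) :
  (forall x, h (a x) = b (h x)) -> mdim a = mdim b :> \bar R.
Proof.
move=> hab; rewrite /mdim; congr ereal_sup; apply/seteqP; split => _ [U cU <-].
- exists (cover_preimage g U); first exact: finite_open_cover_preimage.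
  by rewrite -(cover_D_dyn_conj _ hab) cover_preimageK.
- exists (cover_preimage h U); first exact: finite_open_cover_preimage.
  by rewrite (cover_D_dyn_conj _ hab).
Qed.

End Conjugacy.

Lemma limn_bounded_div_nat {R : realType} (c : nat -> R) (M : R) :
  (forall n, 0 <= c n <= M) -> limn (fun n => c n / n%:R) = 0.
Proof.
move=> cM; apply: cvg_lim => //; rewrite -cvg_shiftS.
have Mharmonic : (fun n => M * harmonic n) @ \oo --> (0 : R).
  by rewrite -(mulr0 M); apply: cvgM; [exact: cvg_cst | exact: cvg_harmonic].
apply: squeeze_cvgr (cvg_cst 0) Mharmonic; apply: nearW => n /=.
have /andP[c_ge0 c_leM] := cM n.+1.
by rewrite divr_ge0 //= ler_wpM2r.
Qed.

Section MeanDimensionZero.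
Context {T : topologicalType} {R : realType}.
Implicit Types (U : seq (set T)) (a : T -> T).

Lemma cover_D_dyn_eq0 U a M :
  (forall n, refinement_orders (cover_iter_join a U n) M) -> cover_D_dyn U a = 0 :> R.
Proof. by move=> bounded; apply: (@limn_bounded_div_nat _ _ M%:R) => n; exact: cover_D_le. Qed.

Lemma mdim_eq0 a :
  (forall U, finite_open_cover U -> cover_D_dyn U a = 0 :> R) -> mdim a = 0%E :> \bar R.
Proof.
move=> D0; rewrite /mdim.
have -> : [set (cover_D_dyn U a : R)%:E | U in finite_open_cover] = [set 0%E].
  apply/seteqP; split => [_ [U cU <-] | x /= ->]; first by rewrite /= D0.
  have cT := @finite_open_coverT T.
  by exists [:: setT]; rewrite // D0.
exact: ereal_sup1.
Qed.

End MeanDimensionZero.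

Lemma open_setX {S T : topologicalType} (A : set S) (B : set T) :
  open A -> open B -> open (A `*` B).
Proof.
move=> oA oB; rewrite openE => -[a b] [/= Aa Bb].
by exists (A, B) => //; split; exact: open_nbhs_nbhs.
Qed.

Section ProductCovers.
Context {S T : topologicalType}.
Implicit Types (V : seq (set S)) (Q : seq (set T)).

Definition cover_setX V Q : seq (set (S * T)) := [seq A `*` B | A <- V, B <- Q].

Lemma finite_open_cover_setX V Q :
  finite_open_cover V -> finite_open_cover Q -> finite_open_cover (cover_setX V Q).
Proof.
move=> [/List.Forall_forall oV cV] [/List.Forall_forall oQ cQ]; split.
  apply/List.Forall_forall => _ /In_allpairs_inv [A [B [VA QB ->]]].
  by apply: open_setX; [exact: oV | exact: oQ].
move=> [x y]; have [A [VA Ax]] := cV x; have [B [QB By]] := cQ y.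
by exists (A `*` B); split; [exact: In_allpairs | split].
Qed.

Lemma ord_le_setX V Q n : ord_le V n -> ord_le (cover_setX V Q) (n.+1 * size Q).
Proof.
move=> Vn [x y]; apply: leqW.
pose inA (A : set S) := `[< A x >]; pose inB (B : set T) := `[< B y >].
apply: leq_trans (count_allpairs_leq (pA := inA) (pB := inB) _ _ _) _.
  by move=> A B /asboolP[Ax By]; apply/andP; split; apply/asboolP.
exact: leq_mul (Vn x) (count_size _ _).
Qed.

End ProductCovers.

Section LebesgueNumber.
Context {R : realType} {X : pseudoMetricType R}.
Hypothesis cX : compact [set: X].

Lemma lebesgue_number (U : seq (set X)) : finite_open_cover U ->
  exists2 e : R, 0 < e & forall x, exists A, List.In A U /\ ball x e `<=` A.
Proof.
move=> [/List.Forall_forall oU cU].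
pose P e x := exists A, List.In A U /\ ball x e `<=` A.
have P_near x : [set: X] x -> \forall x' \near x & e \near (0 : R)^'+, P e x'.
  move=> _; have [A [UA Ax]] := cU x.
  have /nbhs_ballP [r /= r_gt0 xrA] : nbhs x A by apply: open_nbhs_nbhs; split => //; exact: oU.
  exists (ball x (r / 2), [set e : R | 0 < e < r / 2]).
    split; first by apply: nbhsx_ballx; rewrite divr_gt0.
    exists (r / 2); first by rewrite /= divr_gt0.
    move=> e /= e_lt e_gt0; rewrite e_gt0 /=.
    by move: e_lt; rewrite /ball_ /= sub0r normrN gtr0_norm.
  move=> [x' e] [/= xx' /andP [_ e_lt]]; exists A; split => // w x'w.
  apply: xrA; rewrite (splitr r); apply: ball_triangle xx' _.
  by apply: le_ball x'w; rewrite ltW.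
have P_small : \forall e \near (0 : R)^'+, [set: X] `<=` P e.
  exact: (proj1 (compact_near_coveringP [set: X]) cX) R _ P _ P_near.
have [e [Pe e_gt0]] := filter_ex (filterI P_small (nbhs_right_gt 0)).
by exists e => // x; exact: Pe.
Qed.

Lemma finite_open_cover_in_balls (e : R) : 0 < e ->
  exists P : seq (set X), finite_open_cover P /\
    forall C, List.In C P -> exists c, C `<=` ball c e.
Proof.
move=> e_gt0; have [[x0 _]|X0] := pselect (exists x : X, True); last first.
  by exists [::]; split => //; split => // x; case: X0; exists x.
(* [compact_cover] is only stated for pointed spaces. *)
pose Xp := HB.pack_for ptopologicalType X (isPointed.Build X x0).
have /(_ _ [set: X] (fun c => (ball c e)°)) [] : @cover_compact Xp [set: X].
  by rewrite -(@compact_cover Xp).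
- by move=> c _; exact: open_interior.
- by move=> x _; exists x => //; exact: nbhsx_ballx.
move=> D _ XD; exists [seq (ball c e)° | c <- enum_fset D]; split; first split.
- by apply/List.Forall_forall => _ /In_map_inv [c _ ->]; exact: open_interior.
- move=> x; have [c Dc xc] := XD x I.
  by exists (ball c e)°; split => //; apply: In_map; exact: In_mem.
- by move=> _ /In_map_inv [c _ ->]; exists c; exact: interior_subset.
Qed.

End LebesgueNumber.

Section ProductWithIdentity.
Context {R : realType} {Z Y : pseudoMetricType R} (zeta : Z -> Z).

Lemma iter_prod_id k (p : Z * Y) : iter k (prod_id zeta) p = (iter k zeta p.1, p.2).
Proof. by case: p => z y; elim: k => //= k ->. Qed.

Lemma refines_iter_join_setX (P : seq (set Z)) (U : seq (set (Z * Y))) (D : set Y) n :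
  refines [seq C `*` D | C <- P] U ->
  refines [seq E `*` D | E <- cover_iter_join zeta P n] (cover_iter_join (prod_id zeta) U n).
Proof.
move=> PU; elim: n => [|k IH] _ /In_map_inv [E JE ->] /=.
  by case: JE => [<-|[]]; exists setT; split; [left|].
have [E1 [B [JE1 PB ->]]] := In_allpairs_inv JE; have [C PC ->] := In_map_inv PB.
have [E1' [JE1' E1DE1']] := IH _ (In_map _ JE1).
have [A [UA CDA]] := PU _ (In_map _ PC).
exists (E1' `&` (iter k (prod_id zeta) @^-1` A)); split.
  by apply: In_allpairs => //; exact: In_map.
move=> [z y] [/= [E1z Cz] Dy]; split; first exact: E1DE1'.
by rewrite /= iter_prod_id; exact: CDA.
Qed.

Hypotheses (czeta : continuous zeta) (Zdim : finite_covering_dim (T := Z)).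
Hypotheses (cZ : compact [set: Z]) (cY : compact [set: Y]).

Lemma mdim_prod_id_eq0 : mdim (prod_id zeta : Z * Y -> Z * Y) = 0%E :> \bar R.
Proof.
have [d Zd] := Zdim.
have cZY : compact [set: Z * Y] by rewrite -setXTT; exact: compact_setX.
apply: mdim_eq0 => U cU.
have [e e_gt0 eU] := lebesgue_number cZY cU.
have [P [cP Pe]] := finite_open_cover_in_balls cZ e_gt0.
have [Q [cQ Qe]] := finite_open_cover_in_balls cY e_gt0.
apply: (cover_D_dyn_eq0 (M := d.+1 * size Q)) => n.
have [V [cV [VJ Vd]]] := Zd _ (finite_open_cover_iter_join n czeta cP).
exists (cover_setX V Q); split; [exact: finite_open_cover_setX | split; last exact: ord_le_setX].
move=> _ /In_allpairs_inv [C [D [VC QD ->]]].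
have PDU : refines [seq C `*` D | C <- P] U.
  move=> _ /In_map_inv [C' PC' ->].
  have [c C'c] := Pe _ PC'; have [c' Dc'] := Qe _ QD; have [A [UA cA]] := eU (c, c').
  by exists A; split => // -[z y] [/C'c zc /Dc' yc]; exact: cA.
have [E [JE CE]] := VJ _ VC.
have [A [UA EDA]] := refines_iter_join_setX PDU (In_map _ JE).
by exists A; split => // -[z y] [/CE Ez Dy]; exact: EDA.
Qed.

End ProductWithIdentity.

Theorem lemma3p2 (R : realType) (Z Y : pseudoMetricType R) (zeta : Z -> Z)
  (hZhaus : hausdorff_space Z) (hZcpt : compact [set: Z])
  (hZinf : infinite_set [set: Z]) (hZconn : connected [set: Z])
  (hZdim : @finite_covering_dim Z)
  (hzeta : is_homeo zeta) (hzmin : minimal_map zeta)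
  (hYhaus : hausdorff_space Y) (hYcpt : compact [set: Y])
  (alpha : Z * Y -> Z * Y)
  (halpha : alpha \in conj_orbit (@prod_id Z Y zeta)) :
  @mdim _ R alpha = 0%E.
Proof.
move: halpha; rewrite inE => -[G [Ginv [GK [GinvK [cG [cGinv ->]]]]]].
have [_ [_ [_ [czeta _]]]] := hzeta.
rewrite (mdim_conj GK GinvK cG cGinv (b := prod_id zeta)) => [|x]; last by rewrite /= GinvK.
exact: mdim_prod_id_eq0.
Qed.
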